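(* If $\theta:\Sigma$, then $\theta\models\mathsf a\#t$ for every $\mathsf a\#t\in|\Sigma|$.
   Context: Terms: $t ::= x \mid \mathsf{a} \mid c \mid f(\vec t)\mid (a\;b)\cdot t\mid\langle a\rangle t$ over variables $x$ and a disjoint countably infinite set of name-symbols $\mathsf a$ (many-sorted: data types $\delta$, name types $\nu$, abstraction types $\langle\nu\rangle\tau$). Contexts $\Sigma::=\cdot\mid\Sigma,x{:}\tau\mid\Sigma\#\mathsf a{:}\nu$ (no symbol twice); $Tm_\Sigma$ is the set of terms well-typed in $\Sigma$; $|\cdot|=\emptyset$, $|\Sigma,x{:}\tau|=|\Sigma|$, $|\Sigma\#\mathsf a{:}\nu|=|\Sigma|\cup\{\mathsf a\#t\mid t\in Tm_\Sigma\}$. $Tm$: ground swapping-free terms $t::=\mathsf a\mid c\mid f(\vec t)\mid\langle\mathsf a\rangle t$. Syntactic swapping: $(\mathsf a\;\mathsf b)\cdot\mathsf a=\mathsf b$, $(\mathsf a\;\mathsf b)\cdot\mathsf b=\mathsf a$, $(\mathsf a\;\mathsf b)\cdot\mathsf c=\mathsf c$ ($\mathsf c\ne\mathsf a,\mathsf b$), $(\mathsf a\;\mathsf b)\cdot c=c$, $(\mathsf a\;\mathsf b)\cdot f(\vec t)=f((\mathsf a\;\mathsf b)\cdot\vec t)$, $(\mathsf a\;\mathsf b)\cdot\langle\mathsf c\rangle t=\langle(\mathsf a\;\mathsf b)\cdot\mathsf c\rangle((\mathsf a\;\mathsf b)\cdot t)$. Freshness (inductive): $\mathsf a\#\mathsf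 b$ if $\mathsf a\ne\mathsf b$; $\mathsf a\#c$; $\mathsf a\#f(\vec t)$ if $\mathsf a\#t_i$ for all $i$; $\mathsf a\#\langle\mathsf a\rangle t$; $\mathsf a\#\langle\mathsf b\rangle t$ if $\mathsf a\ne\mathsf b$ and $\mathsf a\#t$. Equality (inductive): $\mathsf a\approx\mathsf a$; $c\approx c$; $f(\vec t)\approx f(\vec u)$ if $t_i\approx u_i$; $\langle\mathsf a\rangle t\approx\langle\mathsf a\rangle u$ if $t\approx u$; $\langle\mathsf a\rangle t\approx\langle\mathsf b\rangle u$ if $\mathsf a\ne\mathsf b$, $\mathsf a\#u$, $t\approx(\mathsf a\;\mathsf b)\cdot u$. $NTm=Tm/{\approx}$ (freshness and swapping respect $\approx$). An interpretation $\theta$ maps variables to elements of $NTm$ and extends to terms by $\theta(\mathsf a)=\mathsf a$, $\theta(c)=c$, $\theta(f(\vec t))=f(\theta(\vec t))$, $\theta((a\;b)\cdot t)=(\theta(a)\;\theta(b))\cdot\theta(t)$, $\theta(\langle a\rangle t)=\langle\theta(a)\rangle\theta(t)$; $\theta\models a\#t$ iff $\theta(a)\#\theta(t)$. $\theta:\Sigma$ means that for each $x{:}\tau$ in $\Sigma$, $\theta(x)$ is of type $\tau$, and $\mathsf a\#\theta(x)$ holds for each constraint $\mathsf a\#x\in|\Sigma|$ with $x$ a variable. *)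

From Stdlib Require Import List.
Import ListNotations.
Set Implicit Arguments.

Inductive ty (D N : Type) : Type :=
| TData : D -> ty D N
| TName : N -> ty D N
| TAbs : N -> ty D N -> ty D N.
Arguments TData {D N}.
Arguments TName {D N}.
Arguments TAbs {D N}.

Record signature := Signature {
  dsort : Type;
  nsort : Type;
  nsort_eq_dec : forall x y : nsort, {x = y} + {x <> y};
  const : Type;
  func : Type;
  const_ty : const -> ty dsort nsort;
  func_arg_tys : func -> list (ty dsort nsort);
  func_res_ty : func -> ty dsort nsort
}.

Section Nominal.
Variable S : signature.
Local Notation ty := (ty (dsort S) (nsort S)).

(** Name-symbols: countably infinitely many of each name type.
    The name type of a symbol is its first component. *)
Definition atom : Type := (nsort S * nat)%type.
Definition atom_sort (a : atom) : nsort S := fst a.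

Definition atom_eq_dec (a b : atom) : {a = b} + {a <> b}.
Proof. decide equality; [apply PeanoNat.Nat.eq_dec | apply nsort_eq_dec]. Defined.

Definition var : Type := nat.

(** Terms  t ::= x | a | c | f(ts) | (a b).t | <a>t *)
Inductive term : Type :=
| Var : var -> term
| Atm : atom -> term
| Const : const S -> term
| App : func S -> list term -> term
| Swap : term -> term -> term -> term
| Abs : term -> term -> term.

Inductive gterm : Type :=
| GAtm : atom -> gterm
| GConst : const S -> gterm
| GApp : func S -> list gterm -> gterm
| GAbs : atom -> gterm -> gterm.

Definition swap_atom (a b c : atom) : atom :=
  if atom_eq_dec c a then b else if atom_eq_dec c b then a else c.

Fixpoint gswap (a b : atom) (t : gterm) : gterm :=
  match t with
  | GAtm c => GAtm (swap_atom a b c)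
  | GConst c => GConst c
  | GApp f ts => GApp f ((fix go (l : list gterm) :=
                            match l with [] => [] | u :: l' => gswap a b u :: go l' end) ts)
  | GAbs c u => GAbs (swap_atom a b c) (gswap a b u)
  end.

Inductive gfresh (a : atom) : gterm -> Prop :=
| gfresh_atm : forall b, a <> b -> gfresh a (GAtm b)
| gfresh_const : forall c, gfresh a (GConst c)
| gfresh_app : forall f ts, Forall (gfresh a) ts -> gfresh a (GApp f ts)
| gfresh_abs_same : forall t, gfresh a (GAbs a t)
| gfresh_abs : forall b t, a <> b -> gfresh a t -> gfresh a (GAbs b t).

(** Alpha-equality on ground terms (inductive); NTm = gterm / gaeq. *)
Inductive gaeq : gterm -> gterm -> Prop :=
| gaeq_atm : forall a, gaeq (GAtm a) (GAtm a)
| gaeq_const : forall c, gaeq (GConst c) (GConst c)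
| gaeq_app : forall f ts us, Forall2 gaeq ts us -> gaeq (GApp f ts) (GApp f us)
| gaeq_abs_same : forall a t u, gaeq t u -> gaeq (GAbs a t) (GAbs a u)
| gaeq_abs : forall a b t u, a <> b -> gfresh a u -> gaeq t (gswap a b u) ->
    gaeq (GAbs a t) (GAbs b u).

Inductive gtyped : gterm -> ty -> Prop :=
| gt_atm : forall a, gtyped (GAtm a) (TName (atom_sort a))
| gt_const : forall c, gtyped (GConst c) (@const_ty S c)
| gt_app : forall f ts, Forall2 gtyped ts (@func_arg_tys S f) ->
    gtyped (GApp f ts) (@func_res_ty S f)
| gt_abs : forall a t tau, gtyped t tau -> gtyped (GAbs a t) (TAbs (atom_sort a) tau).

(** Contexts  Sigma ::= . | Sigma, x:tau | Sigma # a:nu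
    (the name type of a is atom_sort a). *)
Inductive ctx : Type :=
| CNil : ctx
| CVar : ctx -> var -> ty -> ctx
| CFresh : ctx -> atom -> ctx.

Fixpoint ctx_vars (G : ctx) : list var :=
  match G with CNil => [] | CVar G x _ => x :: ctx_vars G | CFresh G _ => ctx_vars G end.
Fixpoint ctx_atoms (G : ctx) : list atom :=
  match G with CNil => [] | CVar G _ _ => ctx_atoms G | CFresh G a => a :: ctx_atoms G end.

Definition wf_ctx (G : ctx) : Prop := NoDup (ctx_vars G) /\ NoDup (ctx_atoms G).

Fixpoint var_decl (G : ctx) (x : var) (tau : ty) : Prop :=
  match G with
  | CNil => False
  | CVar G' y s => (x = y /\ tau = s) \/ var_decl G' x tau
  | CFresh G' _ => var_decl G' x tau
  end.

Inductive has_type (G : ctx) : term -> ty -> Prop :=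
| ht_var : forall x tau, var_decl G x tau -> has_type G (Var x) tau
| ht_atm : forall a, In a (ctx_atoms G) -> has_type G (Atm a) (TName (atom_sort a))
| ht_const : forall c, has_type G (Const c) (@const_ty S c)
| ht_app : forall f ts, Forall2 (has_type G) ts (@func_arg_tys S f) ->
    has_type G (App f ts) (@func_res_ty S f)
| ht_swap : forall a b t nu tau, has_type G a (TName nu) -> has_type G b (TName nu) ->
    has_type G t tau -> has_type G (Swap a b t) tau
| ht_abs : forall a t nu tau, has_type G a (TName nu) -> has_type G t tau ->
    has_type G (Abs a t) (TAbs nu tau).

Definition in_Tm (G : ctx) (t : term) : Prop := exists tau, has_type G t tau.

(** (a, t) in |Sigma|, i.e. the freshness constraint a # t is in |Sigma|. *)
Fixpoint in_cons (G : ctx) (a : atom) (t : term) : Prop :=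
  match G with
  | CNil => False
  | CVar G' _ _ => in_cons G' a t
  | CFresh G' b => in_cons G' a t \/ (a = b /\ in_Tm G' t)
  end.

(** Interpretations: variables to (representatives of) elements of NTm. *)
Definition interp : Type := var -> gterm.

(** On ill-typed swappings /
    abstractions (where a name position does not denote a name) an arbitrary
    default is used; this never happens for well-typed terms. *)
Fixpoint ext (th : interp) (t : term) : gterm :=
  match t with
  | Var x => th x
  | Atm a => GAtm a
  | Const c => GConst c
  | App f ts => GApp f ((fix go (l : list term) :=
                           match l with [] => [] | u :: l' => ext th u :: go l' end) ts)
  | Swap a b u =>
      match ext th a, ext th b with
      | GAtm a', GAtm b' => gswap a' b' (ext th u)
      | _, _ => ext th u
      end
  | Abs a u =>
      match ext th a with
      | GAtm a' => GAbs a' (ext th u)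
      | _ => ext th u
      end
  end.

(** theta |= a # t  (a a name-symbol, so theta(a) = a). *)
Definition models_fresh (th : interp) (a : atom) (t : term) : Prop :=
  gfresh a (ext th t).

Definition interp_ok (th : interp) (G : ctx) : Prop :=
  (forall x tau, var_decl G x tau -> gtyped (th x) tau) /\
  (forall a x, in_cons G a (Var x) -> gfresh a (th x)).

End Nominal.

(** A constraint a # t in |Σ| stems from a declaration Σ' # a with t ∈ Tm_Σ'.
    No name is declared twice, so a does not occur in Σ', and for every
    variable x of Σ' the constraint a # x is in |Σ|, hence a # θ(x).  Induction
    on t then gives a # θ(t): names of Σ' differ from a, and a swapping of two
    names different from a preserves freshness of a. *)
From Stdlib Require Import List.
Import ListNotations.

Section Freshness.
Variable S : signature.

Definition gterm_nested_ind (P : gterm S -> Prop)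
  (HAtm : forall c : atom S, P (GAtm c)) (HConst : forall c : const S, P (GConst S c))
  (HApp : forall f ts, Forall P ts -> P (GApp f ts))
  (HAbs : forall c u, P u -> P (GAbs c u)) : forall u, P u :=
  fix F u := match u with
  | GAtm c => HAtm c
  | GConst _ c => HConst c
  | GApp f ts => HApp f ts ((fix go l : Forall P l :=
        match l with [] => Forall_nil _ | v :: l' => Forall_cons _ (F v) (go l') end) ts)
  | GAbs c u => HAbs c u (F u)
  end.

Definition term_nested_ind (P : term S -> Prop)
  (HVar : forall x, P (Var S x)) (HAtm : forall c : atom S, P (Atm c))
  (HConst : forall c : const S, P (Const S c))
  (HApp : forall f ts, Forall P ts -> P (App f ts))
  (HSwap : forall a b u, P a -> P b -> P u -> P (Swap a b u))
  (HAbs : forall a u, P a -> P u -> P (Abs a u)) : forall u, P u :=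
  fix F u := match u with
  | Var _ x => HVar x
  | Atm c => HAtm c
  | Const _ c => HConst c
  | App f ts => HApp f ts ((fix go l : Forall P l :=
        match l with [] => Forall_nil _ | v :: l' => Forall_cons _ (F v) (go l') end) ts)
  | Swap a b u => HSwap a b u (F a) (F b) (F u)
  | Abs a u => HAbs a u (F a) (F u)
  end.

Lemma gswap_app (a b : atom S) f ts :
  gswap a b (GApp f ts) = GApp f (map (gswap a b) ts).
Proof. simpl; f_equal; induction ts as [|u ts IH]; simpl; congruence. Qed.

Lemma ext_app (th : interp S) f ts : ext th (App f ts) = GApp f (map (ext th) ts).
Proof. simpl; f_equal; induction ts as [|u ts IH]; simpl; congruence. Qed.

Lemma swap_atom_id (a b c : atom S) : c <> a -> c <> b -> swap_atom a b c = c.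
Proof.
  intros Hca Hcb; unfold swap_atom.
  destruct (atom_eq_dec c a); [contradiction|].
  destruct (atom_eq_dec c b); [contradiction | reflexivity].
Qed.

Lemma swap_atom_neq (a b c d : atom S) :
  d <> a -> d <> b -> d <> c -> d <> swap_atom a b c.
Proof.
  intros Hda Hdb Hdc; unfold swap_atom.
  destruct (atom_eq_dec c a); [assumption|].
  destruct (atom_eq_dec c b); assumption.
Qed.

Lemma gfresh_gswap (a b d : atom S) u :
  d <> a -> d <> b -> gfresh d u -> gfresh d (gswap a b u).
Proof.
  intros Hda Hdb; induction u as [c|c|f ts IH|c u IH] using gterm_nested_ind;
    intros Hu; inversion Hu; subst.
  - constructor; apply swap_atom_neq; assumption.
  - constructor.
  - rewrite gswap_app; constructor; apply Forall_map.
    rewrite Forall_forall in *; auto.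
  - simpl; rewrite swap_atom_id by assumption; apply gfresh_abs_same.
  - simpl; constructor 5; [apply swap_atom_neq|]; auto.
Qed.

Lemma gfresh_ext (th : interp S) (G : ctx S) (d : atom S) :
  ~ In d (ctx_atoms G) ->
  (forall x tau, var_decl G x tau -> gfresh d (th x)) ->
  forall t tau, has_type G t tau -> gfresh d (ext th t).
Proof.
  intros Hd Hvars t; induction t as [x|c|c|f ts IH|a b u IHa IHb IHu|a u IHa IHu]
    using term_nested_ind; intros tau Ht; inversion Ht as
    [ | | |? ? Hts|? ? ? nu ? Ha Hb Hu|? ? nu ? Ha Hu]; subst.
  - eapply Hvars; eassumption.
  - constructor; intros ->; contradiction.
  - constructor.
  - rewrite ext_app; constructor; apply Forall_map.
    clear Ht; induction Hts as [|u tau' ts tys Hu _ IHts]; inversion IH; subst;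
      constructor; eauto.
  - specialize (IHa _ Ha); specialize (IHb _ Hb); specialize (IHu _ Hu); simpl.
    destruct (ext th a); [|auto..]; destruct (ext th b); [|auto..].
    inversion IHa; inversion IHb; subst; apply gfresh_gswap; assumption.
  - specialize (IHa _ Ha); specialize (IHu _ Hu); simpl.
    destruct (ext th a); [|auto..].
    inversion IHa; subst; constructor 5; assumption.
Qed.

Lemma in_cons_models_fresh (G : ctx S) (th : interp S) :
  NoDup (ctx_atoms G) ->
  (forall a x, in_cons G a (Var S x) -> gfresh a (th x)) ->
  forall a t, in_cons G a t -> models_fresh th a t.
Proof.
  induction G as [|G IHG x tau|G IHG b]; simpl; intros Hnd Hvars a t Hin.
  - contradiction.
  - exact (IHG Hnd Hvars a t Hin).
  - inversion Hnd as [|? ? Hb Hnd']; subst.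
    destruct Hin as [Hin | [-> [tau Ht]]].
    + apply IHG; auto.
    + eapply gfresh_ext; [eassumption | | eassumption].
      intros x sigma Hx; apply Hvars; right; split; [reflexivity|].
      exists sigma; constructor; assumption.
Qed.

End Freshness.

Theorem mainTheorem12 (S : signature) (G : ctx S) (th : interp S) :
  wf_ctx G -> interp_ok th G ->
  forall (a : atom S) (t : term S), in_cons G a t -> models_fresh th a t.
Proof.
  intros [_ Hatoms] [_ Hvars].
  exact (in_cons_models_fresh S G th Hatoms Hvars).
Qed.
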